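(* Let $U$ be a nonempty finite set, $R$ a relation on $U$, $M(R)$ the relation matroid induced by $R$, and $R(M(R))$ the relation induced by $M(R)$. Then $R(M(R))=R$ if and only if $R$ is an equivalence relation.
   Context: For $x\in U$, $RS_R(x)=\{y\in U:(x,y)\in R\}$. $\mathbf{I}(R)=\{X\subseteq U: \forall x,y\in X,\ x\neq y \Rightarrow RS_R(x)\neq RS_R(y)\}$; this is the family of independent sets of a matroid $M(R)=(U,\mathbf{I}(R))$, called the relation matroid induced by $R$. For a matroid $M$ on $U$ with family of circuits (minimal dependent sets) $\mathbf{C}(M)$, the relation induced by $M$ is $R(M)$ given by $x\,R(M)\,y \iff x=y$ or $\{x,y\}\in\mathbf{C}(M)$. *)

From mathcomp Require Import all_boot.
Set Implicit Arguments. Unset Strict Implicit. Unset Printing Implicit Defensive.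

Section RelMatroid.
Variable U : finType.

Definition RS (R : rel U) (x : U) : {set U} := [set y | R x y].

Definition rm_indep (R : rel U) (X : {set U}) : bool :=
  [forall x in X, forall y in X, (x != y) ==> (RS R x != RS R y)].

Definition is_circuit (indep : pred {set U}) (C : {set U}) : bool :=
  ~~ indep C && [forall D : {set U}, (D \proper C) ==> indep D].

Definition rel_of_matroid (indep : pred {set U}) : rel U :=
  fun x y => (x == y) || is_circuit indep [set x; y].

Definition rel_of_rel_matroid (R : rel U) : rel U :=
  rel_of_matroid (rm_indep R).

End RelMatroid.

From mathcomp Require Import all_boot.

(* Let x != y.  Every proper subset of the pair {x, y} has at
   most one element, hence is independent in M(R); so {x, y} is a circuit
   exactly when it is dependent, i.e. when RS_R(x) = RS_R(y).  Together with
   the reflexive case x = y this gives the closed form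
       x R(M(R)) y  <->  RS_R(x) = RS_R(y)         (rel_of_rel_matroidE),
   i.e. R(M(R)) is the kernel of the map x |-> RS_R(x).  A kernel relation is
   always an equivalence (kernel_equivalence), which gives one direction;
   conversely, for an equivalence R the successor set RS_R(x) is the class of
   x, and two classes coincide exactly when the points are related
   (equivalence_RS_eq), which gives the other. *)

Section RelationMatroid.
Variable U : finType.
Implicit Types (R : rel U) (x y : U).

Lemma rm_indep_small R (D : {set U}) : #|D| <= 1 -> rm_indep R D.
Proof.
move/card_le1_eqP => D_le1; apply/forallP => a; apply/implyP => Da.
apply/forallP => b; apply/implyP => Db; apply/implyP => neq_ab.
by rewrite (D_le1 a b Da Db) eqxx in neq_ab.
Qed.

Lemma rm_indep_pair R x y :
  x != y -> rm_indep R [set x; y] = (RS R x != RS R y).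
Proof.
move=> neq_xy; apply/idP/idP => [indep_xy | neq_RS].
- have /forallP/(_ y)/implyP := forall_inP indep_xy x (setU11 x [set y]).
  by move/(_ (set22 x y)); rewrite neq_xy.
- apply/forallP => a; apply/implyP; rewrite !inE => /orP[]/eqP->;
  apply/forallP => b; apply/implyP; rewrite !inE => /orP[]/eqP->;
  rewrite ?eqxx //=; apply/implyP => _; by rewrite // eq_sym.
Qed.

(* A pair of distinct points is a circuit of M(R) iff it is dependent, since
   all its proper subsets are independent. *)
Lemma rm_circuit_pair R x y :
  x != y -> is_circuit (rm_indep R) [set x; y] = (RS R x == RS R y).
Proof.
move=> neq_xy; rewrite /is_circuit rm_indep_pair // negbK.
suff -> : [forall D : {set U}, (D \proper [set x; y]) ==> rm_indep R D].
  by rewrite andbT.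
apply/forallP => D; apply/implyP => /proper_card.
by rewrite cards2 neq_xy => /rm_indep_small.
Qed.

Lemma rel_of_rel_matroidE R x y :
  rel_of_rel_matroid R x y = (RS R x == RS R y).
Proof.
rewrite /rel_of_rel_matroid /rel_of_matroid.
have [-> | neq_xy] := eqVneq x y; first by rewrite eqxx.
exact: rm_circuit_pair.
Qed.

Lemma equivalence_RS_eq R :
  reflexive R -> symmetric R -> transitive R ->
  forall x y, (RS R x == RS R y) = R x y.
Proof.
move=> reflR symR trR x y; apply/eqP/idP => [eq_RS | Rxy].
- have : y \in RS R y by rewrite inE reflR.
  by rewrite -eq_RS inE.
- apply/setP => z; rewrite !inE; apply/idP/idP => [Rxz | Ryz].
  + by apply: (trR x); rewrite // symR.
  + exact: (trR y).
Qed.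

End RelationMatroid.

Lemma kernel_equivalence (T : Type) (rT : eqType) (f : T -> rT) :
  [/\ reflexive [rel x y | f x == f y], symmetric [rel x y | f x == f y]
     & transitive [rel x y | f x == f y]].
Proof.
split=> [x | x y | y x z]; rewrite /= ?eqxx // 1?eq_sym //.
by move=> /eqP -> /eqP ->.
Qed.

Theorem mainTheorem17 (U : finType) (HU : 0 < #|U|) (R : rel U) :
  rel_of_rel_matroid R =2 R <->
  [/\ reflexive R, symmetric R & transitive R].
Proof.
split=> [eqR | [reflR symR trR] x y].
- have [reflK symK trK] := @kernel_equivalence U _ (RS R).
  split=> [x | x y | y x z]; rewrite -!eqR !rel_of_rel_matroidE.
  + exact: reflK.
  + exact: symK.
  + exact: trK.
- by rewrite rel_of_rel_matroidE equivalence_RS_eq.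
Qed.
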